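(* For $i=1,2$ let $\lambda_i\in\mathbb{C}^*$, $\alpha_i\in\mathbb{C}\setminus\{0\}$, and $h_i=\xi_it+\eta_i\in\mathbb{C}[t]$ with $\xi_i\ne0$. Then $\Omega(\lambda_1,\alpha_1,h_1)\cong\Omega(\lambda_2,\alpha_2,h_2)$ as $\mathrm{Vir}$-modules if and only if $\lambda_1=\lambda_2$ and $\alpha_1\xi_1=\alpha_2\xi_2$; and in that case the isomorphisms are exactly the nonzero scalar multiples of the linear map $\phi$ with $\phi(s^ih_1^n)=s^ig_n(h_2)$ for all $n,i\in\mathbb{Z}_+$, where $g_n(x)=\sum_{i=0}^n\binom{n}{i}b_{n-i}x^i$ and $b_0=1$, $b_1=0$, $b_{i+1}=ib_i+i(\eta_2-\eta_1)b_{i-1}$ for $i\in\mathbb{N}$.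
   Context: $\mathrm{Vir}$ is the Lie algebra with basis $\{d_i,c\mid i\in\mathbb{Z}\}$ and brackets $[d_i,d_j]=(j-i)d_{i+j}+\delta_{i,-j}\frac{i^3-i}{12}c$, $[c,d_i]=0$. For $\lambda\in\mathbb{C}^*$, $\alpha\in\mathbb{C}$, $h\in\mathbb{C}[t]$, define operators on $\mathbb{C}[t]$ by $F(f)=\frac{h(t)-h(\alpha)}{t-\alpha}f(t)-f'(t)$ and $G(f)=h(\alpha)f+tF(f)$. The $\mathrm{Vir}$-module $\Omega(\lambda,\alpha,h)$ is the vector space $\mathbb{C}[t,s]$ with $c$ acting as $0$ and $d_m(f(t)s^i)=\lambda^m(s-m)^i\big(sf+mG(f)-m^2\alpha F(f)\big)$ for $m\in\mathbb{Z}$, $i\in\mathbb{Z}_+$, $f\in\mathbb{C}[t]$. *)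

(* Complex numbers are modelled as R[i] (mathcomp-real-closed
   `complex`) over an arbitrary R : realType (every realType is the real line). *)
From HB Require Import structures.
From mathcomp Require Import all_boot all_order all_algebra.
From mathcomp Require Import reals complex.
Set Implicit Arguments. Unset Strict Implicit. Unset Printing Implicit Defensive.
Import Order.TTheory GRing.Theory Num.Theory.
Local Open Scope ring_scope.

Section Omega.
Variable R : realType.
Local Notation C := (R[i]).
(* C[t,s] is represented as {poly {poly C}}: outer variable s, coefficients in C[t]. *)
Local Notation V := {poly {poly C}}.

(* F(f) = (h(t)-h(alpha))/(t-alpha) f(t) - f'(t)  (the division is exact) *)
Definition Fop (alpha : C) (h f : {poly C}) : {poly C} :=
  ((h - (h.[alpha])%:P) %/ ('X - alpha%:P)) * f - f^`().

Definition Gop (alpha : C) (h f : {poly C}) : {poly C} :=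
  h.[alpha] *: f + 'X * Fop alpha h f.

(* action of d_m on Omega(lambda, alpha, h), extended linearly from
   d_m (f(t) s^i) = lambda^m (s-m)^i (s f + m G(f) - m^2 alpha F(f)) *)
Definition dact (lambda alpha : C) (h : {poly C}) (m : int) (v : V) : V :=
  \sum_(i < size v)
    ((lambda ^ m)%:P%:P *
     (('X - ((m%:~R : C)%:P)%:P) ^+ i *
      ('X * (v`_i)%:P + ((m%:~R : C) *: Gop alpha h v`_i)%:P
       - (((m ^+ 2)%:~R * alpha) *: Fop alpha h v`_i)%:P))).

Definition Clinear (phi : V -> V) : Prop :=
  forall (a : C) (v w : V), phi (a%:P%:P * v + w) = a%:P%:P * phi v + phi w.

(* Vir-module isomorphism Omega(l1,a1,h1) -> Omega(l2,a2,h2): a bijective linear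
   map commuting with every d_m (c acts as 0 on both modules). *)
Definition Vir_iso (l1 a1 : C) (h1 : {poly C}) (l2 a2 : C) (h2 : {poly C})
  (phi : V -> V) : Prop :=
  [/\ Clinear phi, bijective phi &
      forall (m : int) (v : V), phi (dact l1 a1 h1 m v) = dact l2 a2 h2 m (phi v)].

Definition Omega_isomorphic (l1 a1 : C) (h1 : {poly C}) (l2 a2 : C) (h2 : {poly C}) :=
  exists phi : V -> V, Vir_iso l1 a1 h1 l2 a2 h2 phi.

Fixpoint bseq (d : C) (n : nat) : C :=
  match n with
  | 0 => 1
  | 1 => 0
  | S ((S i) as k) => (k%:R * bseq d k + k%:R * d * bseq d i)
  end.

Definition gpoly (d : C) (n : nat) : {poly C} :=
  \sum_(i < n.+1) (('C(n, i))%:R * bseq d (n - i)) *: 'X^i.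

Definition phi_spec (d : C) (h1 h2 : {poly C}) (phi : V -> V) : Prop :=
  forall n i : nat, phi ('X^i * (h1 ^+ n)%:P) = 'X^i * ((gpoly d n) \Po h2)%:P.

End Omega.

(* Write h_i = xi_i t + eta_i.  Since d_0 is multiplication by s and d_1 raises the
   t-degree, Omega(lambda, alpha, h) is generated by 1, so a homomorphism is determined
   by the image of 1.

   Necessity: for an isomorphism psi, the s-coefficients of psi (d_n v) = d_n (psi v),
   read as polynomial identities in n, give lambda_1 = lambda_2, show that psi maps C[t]
   into C[t], and give alpha_1 psi (F f) = alpha_2 F (psi f).  At f = 1, with psi 1 = g,
   this is alpha_1 xi_1 g = alpha_2 (xi_2 g - g'): leading coefficients give
   alpha_1 xi_1 = alpha_2 xi_2, and then g' = 0, so psi 1 is a nonzero constant c.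

   Sufficiency: in the variable x = h_i(t), F becomes xi_i (p - p') and G becomes a map
   depending only on alpha_i xi_i and eta_i.  The linear map x^n |-> g_n(x) commutes with
   differentiation (g_n' = n g_(n-1)) and, by the recursion of the b_n, intertwines the
   two versions of G.  Applied coefficientwise in s it is an isomorphism phi, with the
   symmetric construction as inverse, and every isomorphism is c phi because both agree
   on 1. *)

From Pilot Require Import Defs.
From HB Require Import structures.
From mathcomp Require Import all_boot all_order all_algebra.
From mathcomp Require Import reals complex.
From mathcomp Require Import ring zify.
Set Implicit Arguments. Unset Strict Implicit. Unset Printing Implicit Defensive.
Import Order.TTheory GRing.Theory Num.Theory.
Local Open Scope ring_scope.

Section NatrRoots.
Variable R : idomainType.
Hypothesis R_pchar0 : [pchar R] =i pred0.

Lemma natr_inj : injective (fun n : nat => n%:R : R).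
Proof.
move=> i j; wlog le_ij : i j / (i <= j)%N => [hw | /eqP].
  by case: (leqP i j) => [/hw // | /ltnW /hw h /esym /h].
rewrite eq_sym -subr_eq0 -natrB // (pcharf0P _).1 // subn_eq0 => le_ji.
by apply/eqP; rewrite eqn_leq le_ij.
Qed.

Lemma poly_natr_eq0 (p : {poly R}) : (forall n : nat, p.[n%:R] = 0) -> p = 0.
Proof.
move=> p_natr0; apply/eqP; apply: contraT => nz_p.
have uniq_natr : uniq [seq i%:R : R | i <- iota 0 (size p)].
  by rewrite map_inj_uniq ?iota_uniq //; apply: natr_inj.
have roots_natr : all (root p) [seq i%:R : R | i <- iota 0 (size p)].
  by apply/allP => _ /mapP[i _ ->]; apply/rootP.
by have := max_poly_roots nz_p roots_natr uniq_natr; rewrite size_map size_iota ltnn.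
Qed.

(* Both sides are polynomials in n; the left one has degree N + 3 > 2. *)
Lemma natr_identity_top (N : nat) (u w : nat -> R) (a b : R) :
  (forall n : nat, \sum_(i < N.+2) (- n%:R) ^+ i * (n%:R * u i - n%:R ^+ 2 * w i)
                   = n%:R * a - n%:R ^+ 2 * b) ->
  w N.+1 = 0.
Proof.
move=> eq_n.
pose Q : {poly R} := \sum_(i < N.+2) (((-1) ^+ i * u i) *: 'X^(i.+1)
                                      - ((-1) ^+ i * w i) *: 'X^(i.+2))
                     - (a *: 'X - b *: 'X^2).
have /(congr1 (fun q : {poly R} => q`_N.+3)) : Q = 0.
  apply: poly_natr_eq0 => n.
  rewrite /Q !(hornerD, hornerN) horner_sum !hornerZ hornerX hornerXn.
  have -> : a * n%:R - b * n%:R ^+ 2 = n%:R * a - n%:R ^+ 2 * b by ring.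
  under eq_bigr do rewrite !(hornerD, hornerN) !hornerZ !hornerXn.
  by rewrite -eq_n -sumrB big1 // => i _; rewrite [(- (n%:R : R)) ^+ i]exprNn !exprS; ring.
rewrite /Q coef0 coefB coef_sum big_ord_recr /= big1 => [|i _]; last first.
  by rewrite coefB !coefZ !coefXn !gtn_eqF ?mulr0 ?subr0 //; have := ltn_ord i; lia.
rewrite add0r coefB !coefZ !coefXn coefB coefZ coefX coefZ coefXn /=.
rewrite eqxx eqSS gtn_eqF // !mulr0 mulr1 subrr sub0r subr0 => /eqP.
by rewrite oppr_eq0 mulf_eq0 signr_eq0 => /eqP.
Qed.

Lemma natr_linear_sqr_eq0 (x y : R) :
  (forall n : nat, n%:R * x = n%:R ^+ 2 * y) -> x = 0 /\ y = 0.
Proof.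
move=> xy; have p0 : x *: 'X - y *: 'X^2 = 0 :> {poly R}.
  apply: poly_natr_eq0 => // n.
  by rewrite hornerD hornerN !hornerZ hornerX hornerXn mulrC xy mulrC subrr.
split; [move/(congr1 (coefp 1)): p0 | move/(congr1 (coefp 2)): p0].
  by rewrite /= coefB !coefZ coefX coefXn /= mulr1 mulr0 subr0 coef0.
rewrite /= coefB !coefZ coefX coefXn /= mulr1 mulr0 sub0r coef0.
by move/eqP; rewrite oppr_eq0 => /eqP.
Qed.

End NatrRoots.

Lemma expr_affine_eq (R : idomainType) (a b p w : R) : p != 0 ->
  (forall n : nat, a ^+ n * (p + n%:R * w) = b ^+ n * p) -> a = b.
Proof.
move=> p_neq0 ab; have ab1 := ab 1%N; have ab2 := ab 2%N.
have : (a - b) ^+ 2 * p = 0.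
  transitivity (2%:R * a * (a ^+ 1 * (p + 1%:R * w) - b ^+ 1 * p)
                - (a ^+ 2 * (p + 2%:R * w) - b ^+ 2 * p)); first by ring.
  by rewrite ab1 ab2 !subrr mulr0 subrr.
by move/eqP; rewrite mulf_eq0 (negbTE p_neq0) orbF expf_eq0 subr_eq0 => /eqP.
Qed.

Lemma deriv_eq0_size (R : numDomainType) (p : {poly R}) : p^`() = 0 -> (size p <= 1)%N.
Proof.
case size_p : (size p) => [|[|s]] // dp0.
have : lead_coef p != 0 by rewrite lead_coef_eq0 -size_poly_eq0 size_p.
rewrite lead_coefE size_p /= => /negPf lc_p.
by move: (congr1 (coefp s) dp0) => /= /eqP; rewrite coef_deriv coef0 mulrn_eq0 lc_p.
Qed.

Lemma linear_polyXn_ext (R : nzRingType) (W : lmodType R) (f g : {linear {poly R} -> W}) :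
  (forall n, f 'X^n = g 'X^n) -> forall p, f p = g p.
Proof.
move=> fg p; rewrite -[p]coefK poly_def !linear_sum; apply: eq_bigr => i _.
by rewrite !linearZ fg.
Qed.

Section Omega.
Variable R : realType.
Local Notation C := (R[i]).
Local Notation V := {poly {poly C}}.
Local Notation affine xi eta := (xi *: 'X + eta%:P).
(* Unfolding these operators makes [/=] very slow over [R[i]]. *)
Local Arguments Fop : simpl never.
Local Arguments Gop : simpl never.

(** * The operators [F] and [G] for an affine [h] *)

Fact Fop_is_linear (a : C) (h : {poly C}) : linear (Fop a h).
Proof. by move=> c f g; rewrite /Fop linearP /= -!mul_polyC; ring. Qed.
HB.instance Definition _ (a : C) (h : {poly C}) :=
  GRing.isLinear.Build C {poly C} {poly C} *:%R (Fop a h) (Fop_is_linear a h).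

Fact Gop_is_linear (a : C) (h : {poly C}) : linear (Gop a h).
Proof. by move=> c f g; rewrite /Gop !linearP /= -!mul_polyC; ring. Qed.
HB.instance Definition _ (a : C) (h : {poly C}) :=
  GRing.isLinear.Build C {poly C} {poly C} *:%R (Gop a h) (Gop_is_linear a h).

Lemma Fop_affine (a xi eta : C) (f : {poly C}) : Fop a (affine xi eta) f = xi *: f - f^`().
Proof.
rewrite /Fop; congr (_ - _).
have -> : affine xi eta - ((affine xi eta).[a])%:P = xi%:P * ('X - a%:P).
  by rewrite !hornerE -mul_polyC; ring.
by rewrite mulpK ?polyXsubC_eq0 // mul_polyC.
Qed.

Lemma Gop_affine (a xi eta : C) (f : {poly C}) :
  Gop a (affine xi eta) f = (xi * a + eta) *: f + 'X * (xi *: f - f^`()).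
Proof. by rewrite /Gop Fop_affine !hornerE. Qed.

Lemma Fop_affine1 (a xi eta : C) : Fop a (affine xi eta) 1 = xi%:P.
Proof. by rewrite Fop_affine -polyC1 derivC subr0 -mul_polyC mulr1. Qed.

Section AffineF.
Variables (a xi eta : C).
Hypothesis xi_neq0 : xi != 0.

Lemma size_Fop_affine f : size (Fop a (affine xi eta) f) = size f.
Proof.
have [-> | nz_f] := eqVneq f 0; first by rewrite linear0.
by rewrite Fop_affine size_polyDl size_scale // size_polyN lt_size_deriv.
Qed.

Lemma lead_coef_Fop_affine f : lead_coef (Fop a (affine xi eta) f) = xi * lead_coef f.
Proof.
have [-> | nz_f] := eqVneq f 0; first by rewrite linear0 lead_coef0 mulr0.
by rewrite Fop_affine lead_coefDl ?lead_coefZ // size_scale // size_polyN lt_size_deriv.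
Qed.

Lemma Fop_affine_eq0 f : (Fop a (affine xi eta) f == 0) = (f == 0).
Proof. by rewrite -!size_poly_eq0 size_Fop_affine. Qed.

End AffineF.

(** * [C]-linear maps on [C[t,s]] and the action of [d_m] *)

Section ClinearTheory.
Variable th : V -> V.
Hypothesis th_lin : Clinear th.

Lemma Clinear0 : th 0 = 0.
Proof.
have := th_lin 1 0 0; rewrite mulr0 addr0 !polyC1 mul1r => th0.
by apply: (addrI (th 0)); rewrite addr0 -th0.
Qed.

Lemma ClinearD v w : th (v + w) = th v + th w.
Proof. by have := th_lin 1 v w; rewrite !polyC1 !mul1r. Qed.

Lemma ClinearZ c v : th (c%:P%:P * v) = c%:P%:P * th v.
Proof. by have := th_lin c v 0; rewrite !addr0 Clinear0 addr0. Qed.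

Lemma ClinearN v : th (- v) = - th v.
Proof. by have := ClinearZ (-1) v; rewrite !polyCN !polyC1 !mulN1r. Qed.

Lemma ClinearB v w : th (v - w) = th v - th w.
Proof. by rewrite ClinearD ClinearN. Qed.

Lemma Clinear_sum I (r : seq I) (P : pred I) (F : I -> V) :
  th (\sum_(i <- r | P i) F i) = \sum_(i <- r | P i) th (F i).
Proof. exact: (big_morph th ClinearD Clinear0). Qed.

Lemma Clinear_natmul n v : th (n%:R * v) = n%:R * th v.
Proof.
rewrite !mulr_natl; elim: n => [|n IH]; first by rewrite !mulr0n Clinear0.
by rewrite !mulrS ClinearD IH.
Qed.

Lemma Clinear_eq0 : (forall i f, th ('X^i * f%:P) = 0) -> forall v, th v = 0.
Proof.
move=> th_mon v; rewrite -[v]coefK poly_def Clinear_sum big1 // => i _.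
by rewrite -mul_polyC mulrC th_mon.
Qed.

End ClinearTheory.

Lemma Clinear_sub (f g : V -> V) :
  Clinear f -> Clinear g -> Clinear (fun v => f v - g v).
Proof. by move=> f_lin g_lin a v w; rewrite f_lin g_lin; ring. Qed.

Lemma Clinear_scale (c : C) (f : V -> V) :
  Clinear f -> Clinear (fun v => c%:P%:P * f v).
Proof. by move=> f_lin a v w; rewrite f_lin; ring. Qed.

Lemma Clinear_comp (f g : V -> V) : Clinear f -> Clinear g -> Clinear (f \o g).
Proof. by move=> f_lin g_lin a v w /=; rewrite g_lin f_lin. Qed.

Lemma bij_scale (c : C) (f : V -> V) : c != 0 -> bijective f ->
  bijective (fun v => c%:P%:P * f v).
Proof.
move=> c_neq0 [g fK gK]; exists (fun v => g (c^-1%:P%:P * v)) => v.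
  by rewrite mulrA -!polyCM mulVf // !polyC1 mul1r fK.
by rewrite gK mulrA -!polyCM mulfV // !polyC1 mul1r.
Qed.

(* [d_m (f s^i) = lambda^m (s - m)^i (s f + dact_const m m^2 alpha h f)]; [dact_term] is
   this summand with [lambda^m], [m], [m^2] abstracted as [L], [M], [K]. *)
Definition dact_const (M K a : C) (h f : {poly C}) : {poly C} :=
  M *: Gop a h f - (K * a) *: Fop a h f.

Fact dact_const_is_linear (M K a : C) (h : {poly C}) : linear (dact_const M K a h).
Proof. by move=> c f g; rewrite /dact_const !linearP /= -!mul_polyC; ring. Qed.
HB.instance Definition _ (M K a : C) (h : {poly C}) :=
  GRing.isLinear.Build C {poly C} {poly C} *:%R (dact_const M K a h) (dact_const_is_linear M K a h).
Local Arguments dact_const : simpl never.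

Lemma dact_const_nat (n : nat) (a : C) (h f : {poly C}) :
  dact_const n%:R (n%:R ^+ 2) a h f = n%:R * Gop a h f - n%:R ^+ 2 * (a *: Fop a h f).
Proof. by rewrite /dact_const -scalerA -!mul_polyC rmorphXn /= polyC_natr. Qed.

Definition dact_term (L M K a : C) (h : {poly C}) (i : nat) (f : {poly C}) : V :=
  L%:P%:P * ('X - M%:P%:P) ^+ i * ('X * f%:P + (dact_const M K a h f)%:P).

Lemma polyC_scale (c : C) (p : {poly C}) : ((c *: p)%:P : V) = c%:P%:P * p%:P.
Proof. by rewrite -mul_polyC polyCM. Qed.

Lemma dact_term0 (L M K a : C) (h : {poly C}) (i : nat) : dact_term L M K a h i 0 = 0.
Proof.
rewrite /dact_term (linear0 (dact_const M K a h)) polyC0 mulr0 addr0.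
exact: mulr0.
Qed.

Lemma dact_term_linear (L M K a : C) (h : {poly C}) (i : nat) c f g :
  dact_term L M K a h i (c *: f + g) = c%:P%:P * dact_term L M K a h i f + dact_term L M K a h i g.
Proof.
rewrite /dact_term (linearP (dact_const M K a h)) /=.
move: (L%:P%:P * _) (dact_const M K a h f) (dact_const M K a h g) => P u w.
by rewrite !polyCD !polyC_scale; ring.
Qed.

Lemma dact_sum (l a : C) (h : {poly C}) (m : int) (v : V) N : (size v <= N)%N ->
  dact l a h m v = \sum_(i < N) dact_term (l ^ m) m%:~R (m ^+ 2)%:~R a h i v`_i.
Proof.
move=> le_vN; rewrite /dact (eq_bigr (fun i : 'I_(size v) =>
  dact_term (l ^ m) m%:~R (m ^+ 2)%:~R a h i v`_i)) => [|i _]; last first.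
  by rewrite /dact_term polyCB addrA mulrA.
rewrite (big_ord_widen N (fun i => dact_term _ _ _ a h i v`_i)) // big_mkcond /=.
by apply: eq_bigr => i _; case: ltnP => // le_vi; rewrite nth_default // dact_term0.
Qed.

Lemma dact_sum_nat (l a : C) (h : {poly C}) (n : nat) (v : V) N : (size v <= N)%N ->
  dact l a h n v = \sum_(i < N) dact_term (l ^+ n) n%:R (n%:R ^+ 2) a h i v`_i.
Proof. by move=> le_vN; rewrite (dact_sum _ _ _ _ le_vN) rmorphXn. Qed.

Lemma dact_Clinear (l a : C) (h : {poly C}) (m : int) : Clinear (dact l a h m).
Proof.
move=> c v w; set N := maxn (size v) (size w).
have le_vN : (size v <= N)%N by rewrite leq_maxl.
have le_wN : (size w <= N)%N by rewrite leq_maxr.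
have le_cvwN : (size (c%:P%:P * v + w)%R <= N)%N.
  rewrite (leq_trans (size_polyD _ _)) // geq_max le_wN andbT mul_polyC.
  exact: leq_trans (size_scale_leq _ _) le_vN.
rewrite !(dact_sum _ _ _ _ (N := N)) // big_distrr -big_split /=.
by apply: eq_bigr => i _; rewrite coefD coefCM [c%:P * _]mul_polyC dact_term_linear.
Qed.

Lemma dact0 (l a : C) (h : {poly C}) (v : V) : dact l a h 0 v = 'X * v.
Proof.
rewrite (dact_sum _ _ _ _ (leqnn _)) -[in RHS](coefK v) poly_def mulr_sumr.
apply: eq_bigr => i _; rewrite /dact_term /dact_const !mulr0z [0 * a]mul0r !scale0r subrr.
rewrite expr0z !polyC0 subr0 addr0 -mul_polyC; ring.
Qed.

Lemma dact_polyC (l a : C) (h : {poly C}) (n : nat) (f : {poly C}) :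
  dact l a h n f%:P = (l ^+ n)%:P%:P * ('X * f%:P + (dact_const n%:R (n%:R ^+ 2) a h f)%:P).
Proof.
by rewrite (dact_sum_nat _ _ _ _ (size_polyC_leq1 f)) big_ord1 coefC /dact_term expr0 mulr1.
Qed.

Lemma dact_const_polyC (n : nat) (a : C) (h f : {poly C}) :
  ((dact_const n%:R (n%:R ^+ 2) a h f)%:P : V)
  = n%:R * (Gop a h f)%:P - n%:R ^+ 2 * (a *: Fop a h f)%:P.
Proof. by rewrite dact_const_nat polyCB !polyCM polyC_natr expr2. Qed.

Lemma coef_dact_term (L M K a : C) (h : {poly C}) (i : nat) f j :
  (dact_term L M K a h i f)`_j = L%:P * ((if j == 0%N then 0 else (('X - M%:P%:P) ^+ i)`_j.-1) * f
                                     + (('X - M%:P%:P) ^+ i)`_j * dact_const M K a h f).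
Proof.
by rewrite /dact_term -mulrA coefCM mulrDr coefD mulrA !coefMC coefMX.
Qed.

Lemma coef_dact_top (l a : C) (h : {poly C}) (n : nat) (v : V) k : size v = k.+1 ->
  (dact l a h n v)`_k.+1 = (l ^+ n)%:P * v`_k.
Proof.
move=> size_v; rewrite (dact_sum_nat _ _ _ _ (eq_leq size_v)) coef_sum big_ord_recr /=.
have coef_exp (i j : nat) : (i < j)%N -> (('X - (n%:R : C)%:P%:P) ^+ i)`_j = 0.
  by move=> lt_ij; rewrite nth_default // size_exp_XsubC.
rewrite big1 => [|i _]; last first.
  have lt_ik := ltn_ord i.
  by rewrite coef_dact_term /= !coef_exp ?(mul0r, mulr0, addr0) //; lia.
have top : (('X - (n%:R : C)%:P%:P) ^+ k)`_k = 1.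
  by have /monicP := monic_exp k (monicXsubC (n%:R : C)%:P); rewrite lead_coefE size_exp_XsubC.
by rewrite add0r coef_dact_term /= top (coef_exp k k.+1) // mul1r mul0r addr0.
Qed.

Lemma coef0_dact (l a : C) (h : {poly C}) (n : nat) (v : V) :
  (dact l a h n v)`_0
  = (l ^+ n)%:P * \sum_(i < size v) (- (n%:R : C)%:P) ^+ i * dact_const n%:R (n%:R ^+ 2) a h v`_i.
Proof.
rewrite (dact_sum_nat _ _ _ _ (leqnn _)) coef_sum mulr_sumr; apply: eq_bigr => i _.
by rewrite coef_dact_term /= -horner_coef0 horner_exp hornerXsubC sub0r mul0r add0r.
Qed.

Lemma dact_polyC1 (l a : C) (h : {poly C}) (f : {poly C}) :
  dact l a h 1 f%:P = l%:P%:P * ('X * f%:P + (Gop a h f)%:P - a%:P%:P * (Fop a h f)%:P).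
Proof.
rewrite (dact_polyC _ _ _ 1) /dact_const expr1 expr1n mul1r scale1r.
by rewrite polyCB polyC_scale addrA.
Qed.

Lemma hom_mulX (l1 a1 : C) (h1 : {poly C}) (l2 a2 : C) (h2 : {poly C}) (th : V -> V) :
  (forall v, th (dact l1 a1 h1 0 v) = dact l2 a2 h2 0 (th v)) ->
  forall v, th ('X * v) = 'X * th v.
Proof. by move=> th_d0 v; rewrite -(dact0 l1 a1 h1) th_d0 dact0. Qed.

Section Generation.
Variables (l1 a1 xi1 eta1 l2 a2 : C) (h2 : {poly C}).
Hypotheses (l1_neq0 : l1 != 0) (xi1_neq0 : xi1 != 0).
Local Notation h1 := (affine xi1 eta1).

Section Kernel.
Variable th : V -> V.
Hypothesis th_lin : Clinear th.
Hypothesis th_d0 : forall v, th (dact l1 a1 h1 0 v) = dact l2 a2 h2 0 (th v).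
Hypothesis th_d1 : forall v, th (dact l1 a1 h1 1 v) = dact l2 a2 h2 1 (th v).

Lemma hom_Gop_polyC f : th f%:P = 0 -> th (Gop a1 h1 f)%:P = a1%:P%:P * th (Fop a1 h1 f)%:P.
Proof.
move=> th_f; have /eqP := th_d1 f%:P.
rewrite th_f (Clinear0 (dact_Clinear _ _ _ _)) dact_polyC1 (ClinearZ th_lin).
rewrite mulf_eq0 !polyC_eq0 (negbTE l1_neq0) /= !(ClinearB th_lin, ClinearD th_lin).
by rewrite (hom_mulX th_d0) th_f mulr0 add0r (ClinearZ th_lin) subr_eq0 => /eqP.
Qed.

Hypothesis th1 : th 1 = 0.

(* Induction on the degree of [f = f_0 + q t], using
   [xi1 (q t) = G q - (xi1 a1 + eta1) q + q' t] and [hom_Gop_polyC]. *)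
Lemma hom_polyC_eq0 f : th f%:P = 0.
Proof.
elim: (size f) {-2}f (leqnn (size f)) => [|n IH] {}f le_fn.
  by move: le_fn; rewrite leqn0 size_poly_eq0 => /eqP->; rewrite (Clinear0 th_lin).
rewrite -(poly_take_drop 1 f) (size1_polyC (size_take_poly 1 f)) expr1 polyCD.
rewrite (ClinearD th_lin) -[(_`_0)%:P%:P]mulr1 (ClinearZ th_lin) th1 mulr0 add0r.
set q := drop_poly 1 f.
have le_qn : (size q <= n)%N by rewrite size_drop_poly; lia.
have le_dqX : (size (q^`() * 'X)%R <= n)%N.
  have [-> | nz_dq] := eqVneq q^`() 0; first by rewrite mul0r size_poly0.
  rewrite size_mulX // (leq_trans _ le_qn) // lt_size_deriv //.
  by apply: contraNneq nz_dq => ->; rewrite deriv0.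
have th_q := IH q le_qn.
have Xq : xi1 *: (q * 'X) = Gop a1 h1 q - (xi1 * a1 + eta1) *: q + q^`() * 'X.
  by rewrite Gop_affine -!mul_polyC; ring.
have thF := IH _ (leq_trans (eq_leq (size_Fop_affine a1 eta1 xi1_neq0 q)) le_qn).
move: (hom_Gop_polyC th_q) Xq; move: (Gop a1 h1 q) => G thG Xq.
rewrite -[q * 'X](scalerK xi1_neq0) Xq polyC_scale (ClinearZ th_lin) !polyCD polyCN.
rewrite polyC_scale !(ClinearD th_lin, ClinearN th_lin, ClinearZ th_lin).
by rewrite thG thF th_q (IH _ le_dqX); ring.
Qed.

Lemma hom_eq0 v : th v = 0.
Proof.
apply: Clinear_eq0 => // i f; elim: i => [|i IHi].
  by rewrite expr0 mul1r hom_polyC_eq0.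
by rewrite exprS -mulrA (hom_mulX th_d0) IHi mulr0.
Qed.

End Kernel.

Lemma hom_eq (f g : V -> V) : Clinear f -> Clinear g ->
  (forall m v, f (dact l1 a1 h1 m v) = dact l2 a2 h2 m (f v)) ->
  (forall m v, g (dact l1 a1 h1 m v) = dact l2 a2 h2 m (g v)) ->
  f 1 = g 1 -> forall v, f v = g v.
Proof.
move=> f_lin g_lin f_d g_d fg1 v; apply/eqP; rewrite -subr_eq0; apply/eqP.
have fg_d m w : f (dact l1 a1 h1 m w) - g (dact l1 a1 h1 m w)
                = dact l2 a2 h2 m (f w - g w).
  by rewrite f_d g_d (ClinearB (dact_Clinear _ _ _ _)).
by apply: (hom_eq0 (Clinear_sub f_lin g_lin)) => [w|w|]; rewrite ?fg_d ?fg1 ?subrr.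
Qed.

End Generation.

(** * The isomorphism [phi] *)

Section AppellSequence.
Variable d : C.
Local Notation b := (Defs.bseq d).
Local Arguments Defs.bseq : simpl never.

Lemma coef_gpoly n j : (gpoly d n)`_j = 'C(n, j)%:R * b (n - j).
Proof.
rewrite /gpoly coef_sumMXn (big_ord1_cond_eq _ (fun i => 'C(n, i)%:R * b (n - i)) predT).
by rewrite andbT; case: ltnP => // lt_nj; rewrite bin_small ?mul0r.
Qed.

Lemma gpoly0 : gpoly d 0 = 1.
Proof. by apply/polyP => -[|j]; rewrite coef_gpoly coefC ?bin0 ?mul1r // bin0n mul0r. Qed.

Lemma gpoly1 : gpoly d 1 = 'X.
Proof.
by apply/polyP => -[|[|j]]; rewrite coef_gpoly coefX //= ?mulr0 ?binn ?mulr1 // bin_small ?mul0r.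
Qed.

Lemma gpoly_deriv n : (gpoly d n.+1)^`() = n.+1%:R *: gpoly d n.
Proof.
apply/polyP => j; rewrite coef_deriv coefZ !coef_gpoly subSS -mulrnAl -mulr_natl.
by rewrite -natrM -mul_bin_diag natrM mulrA.
Qed.

Lemma bin_bseq_rec n j :
  'C(n.+1, j.+1)%:R * b (n.+1 - j)
  = n.+1%:R * 'C(n, j.+1)%:R * (b (n - j) + d * b (n - j.+1)).
Proof.
case: (ltngtP j n) => [lt_jn | lt_nj | ->]; last first.
- by rewrite subnn subSnn binn [b 1]/Defs.bseq (bin_small (ltnSn n)); ring.
- by rewrite !bin_small ?mulr0 ?mul0r //; lia.
have [r ->] : exists r, n = (j + r.+1)%N by exists (n - j.+1)%N; lia.
have -> : ((j + r.+1).+1 - j = r.+2)%N by lia.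
have -> : (j + r.+1 - j = r.+1)%N by lia.
have -> : (j + r.+1 - j.+1 = r)%N by lia.
have := mul_bin_down (j + r.+1).+1 j.+1; rewrite /= subSS.
have -> : (j + r.+1 - j = r.+1)%N by lia.
move=> /(congr1 (fun k => k%:R : C)); rewrite !natrM => bin_rec.
by rewrite [b r.+2]/Defs.bseq -/(b r.+1) -/(b r) bin_rec; ring.
Qed.

Lemma gpoly_rec n :
  gpoly d n.+2 = n.+1%:R *: gpoly d n.+1 + 'X * gpoly d n.+1
                 - n.+1%:R *: ('X * gpoly d n) + (d * n.+1%:R) *: gpoly d n.
Proof.
apply/polyP => -[|j]; rewrite coefD coefB coefD !coefZ !coefXM !coef_gpoly /=.
  by rewrite !bin0 !subn0 [b n.+2]/Defs.bseq -/(b n.+1) -/(b n); ring.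
by rewrite subSS (binS n.+1 j) natrD mulrDl bin_bseq_rec (binS n j) natrD; ring.
Qed.

End AppellSequence.

Definition gpoly_map (d : C) (p : {poly C}) : {poly C} := \sum_(k < size p) p`_k *: gpoly d k.

Lemma gpoly_map_sum (d : C) (p : {poly C}) N : (size p <= N)%N ->
  gpoly_map d p = \sum_(k < N) p`_k *: gpoly d k.
Proof.
move=> le_pN; rewrite /gpoly_map (big_ord_widen N (fun k => p`_k *: gpoly d k)) //.
rewrite big_mkcond /=; apply: eq_bigr => i _; case: ltnP => // le_pi.
by rewrite nth_default // scale0r.
Qed.

Fact gpoly_map_is_linear (d : C) : linear (gpoly_map d).
Proof.
move=> c p q; set N := maxn (size p) (size q).
have le_pN : (size p <= N)%N by rewrite leq_maxl.
have le_qN : (size q <= N)%N by rewrite leq_maxr.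
have le_cpqN : (size (c *: p + q)%R <= N)%N.
  rewrite (leq_trans (size_polyD _ _)) // geq_max le_qN andbT.
  exact: leq_trans (size_scale_leq _ _) le_pN.
rewrite !(gpoly_map_sum d (N := N)) // scaler_sumr -big_split /=.
by apply: eq_bigr => i _; rewrite coefD coefZ scalerDl scalerA.
Qed.
HB.instance Definition _ (d : C) :=
  GRing.isLinear.Build C {poly C} {poly C} *:%R (gpoly_map d) (gpoly_map_is_linear d).

Lemma gpoly_map_Xn (d : C) n : gpoly_map d 'X^n = gpoly d n.
Proof.
rewrite /gpoly_map size_polyXn big_ord_recr /= coefXn eqxx scale1r big1 ?add0r // => i _.
by rewrite coefXn ltn_eqF ?ltn_ord // scale0r.
Qed.

Lemma gpoly_map_deriv (d : C) (p : {poly C}) : gpoly_map d p^`() = (gpoly_map d p)^`().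
Proof.
apply: (linear_polyXn_ext (f := gpoly_map d \o deriv) (g := deriv \o gpoly_map d)) => -[|n] /=.
  by rewrite derivC linear0 gpoly_map_Xn gpoly0 derivC.
by rewrite derivXn -scaler_nat linearZ /= !gpoly_map_Xn gpoly_deriv.
Qed.

(* [Gop a (affine xi eta)] written in the variable [x = xi t + eta], with [b = xi a]:
   see [Gop_comp_affine]. *)
Definition Gx (b e : C) (p : {poly C}) : {poly C} := (b + e) *: p + ('X - e%:P) * (p - p^`()).

Fact Gx_is_linear (b e : C) : linear (Gx b e).
Proof. by move=> c p q; rewrite /Gx derivD derivZ -!mul_polyC; ring. Qed.
HB.instance Definition _ (b e : C) :=
  GRing.isLinear.Build C {poly C} {poly C} *:%R (Gx b e) (Gx_is_linear b e).

Lemma gpoly_map_Gx (b e1 e2 : C) (p : {poly C}) :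
  gpoly_map (e2 - e1) (Gx b e1 p) = Gx b e2 (gpoly_map (e2 - e1) p).
Proof.
set d := e2 - e1.
apply: (linear_polyXn_ext (f := gpoly_map d \o Gx b e1) (g := Gx b e2 \o gpoly_map d)) => -[|n] /=.
  have -> : Gx b e1 'X^0 = 'X^1 + b *: 'X^0.
    by rewrite /Gx expr0 derivC subr0 expr1 -!mul_polyC; ring.
  by rewrite linearD linearZ /= !gpoly_map_Xn gpoly0 gpoly1 /Gx derivC subr0 -!mul_polyC; ring.
have -> : Gx b e1 'X^(n.+1) = 'X^(n.+2) + (b - n.+1%:R) *: 'X^(n.+1) + (e1 * n.+1%:R) *: 'X^n.
  by rewrite /Gx derivXn -!mul_polyC !exprS -mulr_natl -polyC_natr; ring.
rewrite !linearD !linearZ /= !gpoly_map_Xn gpoly_rec /Gx gpoly_deriv -!mul_polyC /d; ring.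
Qed.

Definition affine_inv (xi eta : C) : {poly C} := xi^-1 *: ('X - eta%:P).

Lemma comp_affine_invK (xi eta : C) (p : {poly C}) : xi != 0 ->
  (p \Po affine_inv xi eta) \Po affine xi eta = p.
Proof.
move=> xi_neq0; rewrite -comp_polyA /affine_inv comp_polyZ comp_polyB comp_polyX comp_polyC.
by rewrite addrK scalerA mulVf // scale1r comp_polyXr.
Qed.

Lemma comp_affineK (xi eta : C) (p : {poly C}) : xi != 0 ->
  (p \Po affine xi eta) \Po affine_inv xi eta = p.
Proof.
move=> xi_neq0; rewrite -comp_polyA comp_polyD comp_polyZ comp_polyX comp_polyC.
by rewrite /affine_inv scalerA mulfV // scale1r subrK comp_polyXr.
Qed.

Lemma Fop_comp_affine (a xi eta : C) (p : {poly C}) :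
  Fop a (affine xi eta) (p \Po affine xi eta) = xi *: ((p - p^`()) \Po affine xi eta).
Proof.
rewrite Fop_affine deriv_comp derivD derivZ derivX derivC addr0 comp_polyB scalerBr.
by rewrite -mul_polyC mulr1 mulrC mul_polyC.
Qed.

Lemma Gop_comp_affine (a xi eta : C) (p : {poly C}) :
  Gop a (affine xi eta) (p \Po affine xi eta) = Gx (xi * a) eta p \Po affine xi eta.
Proof.
rewrite /Gop Fop_comp_affine /Gx !hornerE.
rewrite !(comp_polyB, comp_polyD, comp_polyZ, comp_polyM, comp_polyX, comp_polyC).
by rewrite -!mul_polyC; ring.
Qed.

(* The action of [phi] on the coefficients of [s^i]: [p (h1) |-> g(p) (h2)], where [g]
   maps [x^n] to [g_n (x)]. *)
Definition std_iso_coef (xi1 eta1 xi2 eta2 : C) (f : {poly C}) : {poly C} :=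
  gpoly_map (eta2 - eta1) (f \Po affine_inv xi1 eta1) \Po affine xi2 eta2.

Fact std_iso_coef_is_linear (xi1 eta1 xi2 eta2 : C) : linear (std_iso_coef xi1 eta1 xi2 eta2).
Proof. by move=> c p q; rewrite /std_iso_coef !linearP. Qed.
HB.instance Definition _ (xi1 eta1 xi2 eta2 : C) :=
  GRing.isLinear.Build C {poly C} {poly C} *:%R (std_iso_coef xi1 eta1 xi2 eta2)
    (std_iso_coef_is_linear xi1 eta1 xi2 eta2).
Local Arguments std_iso_coef : simpl never.

Section Transport.
Variables (a1 xi1 eta1 a2 xi2 eta2 : C).
Hypotheses (xi1_neq0 : xi1 != 0) (a1xi1 : a1 * xi1 = a2 * xi2).
Local Notation h1 := (affine xi1 eta1).
Local Notation h2 := (affine xi2 eta2).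
Local Notation T := (std_iso_coef xi1 eta1 xi2 eta2).

Lemma std_iso_coef_comp (p : {poly C}) : T (p \Po h1) = gpoly_map (eta2 - eta1) p \Po h2.
Proof. by rewrite /std_iso_coef comp_affineK. Qed.

Lemma std_iso_coef_Fop f : a1 *: T (Fop a1 h1 f) = a2 *: Fop a2 h2 (T f).
Proof.
rewrite -(comp_affine_invK eta1 f xi1_neq0); set p := f \Po _.
rewrite Fop_comp_affine linearZ /= !std_iso_coef_comp Fop_comp_affine linearB /= gpoly_map_deriv.
by rewrite !scalerA a1xi1.
Qed.

Lemma std_iso_coef_Gop f : T (Gop a1 h1 f) = Gop a2 h2 (T f).
Proof.
rewrite -(comp_affine_invK eta1 f xi1_neq0); set p := f \Po _.
by rewrite Gop_comp_affine !std_iso_coef_comp gpoly_map_Gx Gop_comp_affine mulrC a1xi1 mulrC.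
Qed.

Lemma std_iso_coef_dact_const M K f : T (dact_const M K a1 h1 f) = dact_const M K a2 h2 (T f).
Proof.
rewrite /dact_const linearB [in X in X - _]linearZ [in X in _ - X]linearZ /= std_iso_coef_Gop.
by rewrite -[(K * a1) *: _]scalerA std_iso_coef_Fop scalerA.
Qed.

End Transport.

Lemma dact_term_split (L M K a : C) (h : {poly C}) (i : nat) (f : {poly C}) :
  dact_term L M K a h i f = (L%:P * ('X - M%:P) ^+ i * 'X)^:P * f%:P
                        + (L%:P * ('X - M%:P) ^+ i)^:P * (dact_const M K a h f)%:P.
Proof.
have E : (L%:P * ('X - M%:P) ^+ i)^:P = L%:P%:P * ('X - M%:P%:P) ^+ i.
  by rewrite rmorphM rmorphXn rmorphB /= map_polyX !map_polyC.
have EX : (L%:P * ('X - M%:P) ^+ i * 'X)^:P = L%:P%:P * ('X - M%:P%:P) ^+ i * 'X.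
  by rewrite rmorphM /= E map_polyX.
by rewrite /dact_term EX E; ring.
Qed.

Definition std_iso (xi1 eta1 xi2 eta2 : C) (v : V) : V :=
  \poly_(i < size v) std_iso_coef xi1 eta1 xi2 eta2 v`_i.

Section IsoMap.
Variables (xi1 eta1 xi2 eta2 : C).
Local Notation T := (std_iso_coef xi1 eta1 xi2 eta2).
Local Notation phi := (std_iso xi1 eta1 xi2 eta2).

Lemma coef_std_iso (v : V) i : (phi v)`_i = T v`_i.
Proof.
rewrite coef_poly; case: ltnP => // le_vi.
by rewrite nth_default // [T 0]linear0.
Qed.

Lemma std_iso_Clinear : Clinear phi.
Proof.
move=> a v w; apply/polyP => i.
by rewrite coefD coefCM !coef_std_iso coefD coefCM !mul_polyC std_iso_coef_is_linear.
Qed.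

Lemma std_iso_mul (q f : {poly C}) : phi (q^:P * f%:P) = q^:P * (T f)%:P.
Proof.
apply/polyP => i; rewrite coef_std_iso !coefMC !coef_map_id0 ?polyC0 //.
by rewrite !mul_polyC [T (_ *: _)]linearZ.
Qed.

End IsoMap.

Section Homomorphism.
Variables (a1 xi1 eta1 a2 xi2 eta2 : C).
Hypotheses (xi1_neq0 : xi1 != 0) (a1xi1 : a1 * xi1 = a2 * xi2).
Local Notation h1 := (affine xi1 eta1).
Local Notation h2 := (affine xi2 eta2).
Local Notation T := (std_iso_coef xi1 eta1 xi2 eta2).
Local Notation phi := (std_iso xi1 eta1 xi2 eta2).

Lemma std_iso_dact_term L M K i f : phi (dact_term L M K a1 h1 i f) = dact_term L M K a2 h2 i (T f).
Proof.
rewrite !dact_term_split (ClinearD (std_iso_Clinear _ _ _ _)) !std_iso_mul.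
by rewrite (std_iso_coef_dact_const eta1 eta2 xi1_neq0 a1xi1).
Qed.

Lemma std_iso_dact l m v : phi (dact l a1 h1 m v) = dact l a2 h2 m (phi v).
Proof.
rewrite (dact_sum _ _ _ _ (leqnn (size v))) (dact_sum _ _ _ _ (size_poly (size v) _)).
rewrite (Clinear_sum (std_iso_Clinear _ _ _ _)); apply: eq_bigr => i _.
by rewrite coef_std_iso std_iso_dact_term.
Qed.

End Homomorphism.

Section Spec.
Variables (xi1 eta1 xi2 eta2 : C).
Hypothesis xi1_neq0 : xi1 != 0.
Local Notation h1 := (affine xi1 eta1).
Local Notation h2 := (affine xi2 eta2).
Local Notation phi := (std_iso xi1 eta1 xi2 eta2).

Lemma std_iso_spec : phi_spec (eta2 - eta1) h1 h2 phi.
Proof.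
move=> n i; have Xi : ('X^i : V) = ('X^i : {poly C})^:P by rewrite rmorphXn /= map_polyX.
by rewrite Xi std_iso_mul -Xi -[affine xi1 eta1 ^+ n]comp_Xn_poly std_iso_coef_comp // gpoly_map_Xn.
Qed.

Lemma std_iso1 : phi 1 = 1.
Proof.
have := std_iso_spec 0 0.
by rewrite !expr0 gpoly0 comp_polyC !polyC1 !mul1r.
Qed.

(* The [s^i h1^n] span [C[t,s]] because [h1] has degree one. *)
Lemma phi_spec_unique (psi : V -> V) :
  Clinear psi -> phi_spec (eta2 - eta1) h1 h2 psi -> forall v, psi v = phi v.
Proof.
move=> psi_lin psi_spec v; apply/eqP; rewrite -subr_eq0; apply/eqP; move: v.
have phi_lin := std_iso_Clinear xi1 eta1 xi2 eta2.
apply: (Clinear_eq0 (Clinear_sub psi_lin phi_lin)) => i f.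
rewrite -(comp_affine_invK eta1 f xi1_neq0) comp_polyE rmorph_sum /= mulr_sumr.
rewrite (Clinear_sum psi_lin) (Clinear_sum phi_lin) -sumrB big1 // => k _.
rewrite polyC_scale mulrCA (ClinearZ psi_lin) (ClinearZ phi_lin) psi_spec.
by rewrite std_iso_spec subrr.
Qed.

End Spec.

Section Inverse.
Variables (l a1 xi1 eta1 a2 xi2 eta2 : C).
Hypotheses (l_neq0 : l != 0) (xi1_neq0 : xi1 != 0) (xi2_neq0 : xi2 != 0).
Hypothesis a1xi1 : a1 * xi1 = a2 * xi2.

Lemma std_isoK : cancel (std_iso xi1 eta1 xi2 eta2) (std_iso xi2 eta2 xi1 eta1).
Proof.
move=> v; apply: (@hom_eq l a1 xi1 eta1 l a1 (affine xi1 eta1) l_neq0 xi1_neq0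
          (std_iso xi2 eta2 xi1 eta1 \o std_iso xi1 eta1 xi2 eta2) id).
- exact: Clinear_comp (std_iso_Clinear _ _ _ _) (std_iso_Clinear _ _ _ _).
- by [].
- move=> m w /=.
  by rewrite (std_iso_dact _ _ xi1_neq0 a1xi1) (std_iso_dact _ _ xi2_neq0 (esym a1xi1)).
- by [].
- by rewrite /= !std_iso1.
Qed.

End Inverse.

Lemma std_iso_bij (l a1 xi1 eta1 a2 xi2 eta2 : C) :
  l != 0 -> xi1 != 0 -> xi2 != 0 -> a1 * xi1 = a2 * xi2 ->
  bijective (std_iso xi1 eta1 xi2 eta2).
Proof.
move=> l_neq0 xi1_neq0 xi2_neq0 a1xi1; exists (std_iso xi2 eta2 xi1 eta1).
  exact: (std_isoK eta1 eta2 l_neq0 xi1_neq0 xi2_neq0 a1xi1).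
exact: (std_isoK eta2 eta1 l_neq0 xi2_neq0 xi1_neq0 (esym a1xi1)).
Qed.

Lemma Vir_isoZ (l1 a1 : C) (h1 : {poly C}) (l2 a2 : C) (h2 : {poly C}) (f : V -> V) (c : C) :
  c != 0 -> Vir_iso l1 a1 h1 l2 a2 h2 f ->
  Vir_iso l1 a1 h1 l2 a2 h2 (fun v => c%:P%:P * f v).
Proof.
move=> c_neq0 [f_lin f_bij f_d]; split; first exact: Clinear_scale.
  exact: bij_scale.
by move=> m v; rewrite f_d (ClinearZ (dact_Clinear _ _ _ _)).
Qed.

Lemma eq_Vir_iso (l1 a1 : C) (h1 : {poly C}) (l2 a2 : C) (h2 : {poly C}) (f g : V -> V) :
  f =1 g -> Vir_iso l1 a1 h1 l2 a2 h2 f -> Vir_iso l1 a1 h1 l2 a2 h2 g.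
Proof.
move=> fg [f_lin f_bij f_d]; split; first by move=> a v w; rewrite -!fg f_lin.
  by apply: (eq_bij f_bij).
by move=> m v; rewrite -!fg f_d.
Qed.

Lemma std_iso_Vir_iso (l a1 xi1 eta1 a2 xi2 eta2 : C) :
  l != 0 -> xi1 != 0 -> xi2 != 0 -> a1 * xi1 = a2 * xi2 ->
  Vir_iso l a1 (affine xi1 eta1) l a2 (affine xi2 eta2) (std_iso xi1 eta1 xi2 eta2).
Proof.
move=> l_neq0 xi1_neq0 xi2_neq0 a1xi1; split; first exact: std_iso_Clinear.
  exact: (std_iso_bij eta1 eta2 l_neq0 xi1_neq0 xi2_neq0 a1xi1).
by move=> m v; rewrite (std_iso_dact _ _ xi1_neq0 a1xi1).
Qed.

(** * Isomorphisms are scalar multiples of [phi] *)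

Lemma coef0_Clinear_dact_const (th : V -> V) (n : nat) (a : C) (h f : {poly C}) : Clinear th ->
  (th (dact_const n%:R (n%:R ^+ 2) a h f)%:P)`_0
  = n%:R * (th (Gop a h f)%:P)`_0 - n%:R ^+ 2 * (a *: (th (Fop a h f)%:P)`_0).
Proof.
move=> th_lin; rewrite /dact_const polyCB !polyC_scale (ClinearB th_lin) !(ClinearZ th_lin).
by rewrite coefB !coefCM -mul_polyC polyCM rmorphXn /= polyC_natr mulrA.
Qed.

Section HomConstants.
Variables (l a1 a2 xi2 eta2 : C) (h1 : {poly C}).
Hypotheses (l_neq0 : l != 0) (a2_neq0 : a2 != 0) (xi2_neq0 : xi2 != 0).
Local Notation h2 := (affine xi2 eta2).
Variable th : V -> V.
Hypothesis th_lin : Clinear th.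
Hypothesis th_d : forall (n : nat) v, th (dact l a1 h1 n v) = dact l a2 h2 n (th v).

(* Compare the [s]-free coefficients of [th (d_n f) = d_n (th f)] as polynomials in [n]. *)
Lemma hom_size_polyC f : (size (th f%:P) <= 1)%N.
Proof.
set P := th f%:P; case size_P : (size P) => [|[|k]] //.
have th_X := hom_mulX (th_d 0).
have pchar_polyC0 : [pchar {poly C}] =i pred0 by move=> p; rewrite pchar_poly pchar_num.
have top : a2 *: Fop a2 h2 P`_k.+1 = 0.
  apply: (natr_identity_top pchar_polyC0 (N := k) (u := fun i => Gop a2 h2 P`_i)
    (w := fun i => a2 *: Fop a2 h2 P`_i)
    (a := (th (Gop a1 h1 f)%:P)`_0) (b := a1 *: (th (Fop a1 h1 f)%:P)`_0)) => n.
  have := congr1 (fun v : V => v`_0) (th_d n f%:P).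
  rewrite dact_polyC (ClinearZ th_lin) coefCM (ClinearD th_lin) th_X coefD coefXM add0r.
  rewrite coef0_Clinear_dact_const // coef0_dact size_P => /mulfI ->; last first.
    by rewrite polyC_eq0 expf_neq0.
  by apply: eq_bigr => i _; rewrite dact_const_nat polyC_natr.
move/eqP: top; rewrite scaler_eq0 (negbTE a2_neq0) Fop_affine_eq0 //= => /eqP Pk.
have : lead_coef P != 0 by rewrite lead_coef_eq0 -size_poly_eq0 size_P.
by rewrite lead_coefE size_P Pk eqxx.
Qed.

Lemma hom_Fop f : a1%:P%:P * th (Fop a1 h1 f)%:P = (a2 *: Fop a2 h2 (th f%:P)`_0)%:P.
Proof.
set g := (th f%:P)`_0; have th_f : th f%:P = g%:P := size1_polyC (hom_size_polyC f).
have th_X := hom_mulX (th_d 0).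
have th_dact_const (n : nat) :
    th (dact_const n%:R (n%:R ^+ 2) a1 h1 f)%:P = (dact_const n%:R (n%:R ^+ 2) a2 h2 g)%:P.
  have l_n : ((l ^+ n)%:P%:P : V) != 0 by rewrite !polyC_eq0 expf_neq0.
  have := th_d n f%:P; rewrite th_f !dact_polyC (ClinearZ th_lin) (ClinearD th_lin) th_X th_f.
  by move=> E; apply: (addrI ('X * g%:P)); apply: (mulfI l_n).
have pchar_V0 : [pchar V] =i pred0 by move=> p; rewrite !pchar_poly pchar_num.
have [_ /eqP] : th (Gop a1 h1 f)%:P - (Gop a2 h2 g)%:P = 0
                /\ a1%:P%:P * th (Fop a1 h1 f)%:P - (a2 *: Fop a2 h2 g)%:P = 0.
  apply: (natr_linear_sqr_eq0 pchar_V0) => n.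
  move/eqP: (th_dact_const n); rewrite -subr_eq0 !dact_const_polyC (ClinearB th_lin).
  rewrite !(Clinear_natmul th_lin) -natrX !(Clinear_natmul th_lin) natrX.
  rewrite polyC_scale (ClinearZ th_lin) => /eqP E.
  by rewrite -[RHS]addr0 -E; ring.
by rewrite subr_eq0 => /eqP.
Qed.

End HomConstants.

Lemma Vir_iso_one_neq0 (l1 a1 : C) (h1 : {poly C}) (l2 a2 : C) (h2 : {poly C}) (psi : V -> V) :
  Vir_iso l1 a1 h1 l2 a2 h2 psi -> psi 1 != 0.
Proof.
case=> psi_lin /bij_inj psi_inj _; apply/eqP => psi10.
have /eqP := psi_inj _ _ (etrans psi10 (esym (Clinear0 psi_lin))).
by rewrite oner_eq0.
Qed.

(* The top [s]-coefficient of [psi (d_n 1) = d_n (psi 1)] reads [l1^n (P_k + n W) = l2^n P_k]. *)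
Lemma Vir_iso_lambda (l1 a1 xi1 eta1 l2 a2 xi2 eta2 : C) (psi : V -> V) :
  Vir_iso l1 a1 (affine xi1 eta1) l2 a2 (affine xi2 eta2) psi -> l1 = l2.
Proof.
move=> iso_psi; have psi10 := Vir_iso_one_neq0 iso_psi.
case: iso_psi => psi_lin _ psi_d; set P := psi 1.
have psi_X := hom_mulX (psi_d 0).
set k := (size P).-1; have size_P : size P = k.+1 by rewrite prednK // size_poly_gt0.
have Pk_neq0 : P`_k != 0 by rewrite -lead_coef_eq0 lead_coefE size_P in psi10.
apply/polyC_inj/(expr_affine_eq Pk_neq0 (w := (psi (Gop a1 (affine xi1 eta1) 1)%:P)`_k.+1)).
move=> n; have := congr1 (fun v : V => v`_k.+1) (psi_d n 1).
rewrite -polyC1 dact_polyC (coef_dact_top _ _ _ _ size_P) (ClinearZ psi_lin) coefCM.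
rewrite (ClinearD psi_lin) psi_X coefD coefXM /= polyC1 -/P dact_const_polyC.
rewrite (ClinearB psi_lin) -natrX !(Clinear_natmul psi_lin) polyC_scale Fop_affine1.
rewrite -[(xi1%:P)%:P]mulr1 !(ClinearZ psi_lin) -/P !mulr_natl coefB !coefMn.
have -> : (a1%:P%:P * (xi1%:P%:P * P))`_k.+1 = 0.
  by rewrite !coefCM [P`_k.+1]nth_default ?size_P // !mulr0.
by rewrite mul0rn subr0 !rmorphXn.
Qed.

Section IsoOne.
Variables (l a1 xi1 eta1 a2 xi2 eta2 : C) (psi : V -> V).
Hypotheses (l_neq0 : l != 0) (a2_neq0 : a2 != 0) (xi2_neq0 : xi2 != 0).
Local Notation h1 := (affine xi1 eta1).
Local Notation h2 := (affine xi2 eta2).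
Hypothesis iso_psi : Vir_iso l a1 h1 l a2 h2 psi.
Local Notation g := (psi 1)`_0.

Lemma Vir_iso_one_polyC : psi 1 = g%:P.
Proof.
case: iso_psi => psi_lin _ psi_d.
have := hom_size_polyC l_neq0 a2_neq0 xi2_neq0 psi_lin (fun n => psi_d n) 1.
by rewrite polyC1 => /size1_polyC.
Qed.

Lemma Vir_iso_one_Fop : (a1 * xi1) *: g = a2 *: Fop a2 h2 g.
Proof.
case: iso_psi => psi_lin _ psi_d.
have := hom_Fop l_neq0 a2_neq0 xi2_neq0 psi_lin (fun n => psi_d n) 1.
rewrite polyC1 Fop_affine1 -[(xi1%:P)%:P]mulr1 (ClinearZ psi_lin) {1}Vir_iso_one_polyC.
by rewrite -polyC_scale -polyC_scale scalerA => /polyC_inj.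
Qed.

Lemma Vir_iso_alpha : a1 * xi1 = a2 * xi2.
Proof.
have g_neq0 : g != 0.
  by have := Vir_iso_one_neq0 iso_psi; rewrite {1}Vir_iso_one_polyC polyC_eq0.
have := congr1 lead_coef Vir_iso_one_Fop.
rewrite !lead_coefZ lead_coef_Fop_affine // mulrA => /mulIf; apply.
by rewrite lead_coef_eq0.
Qed.

End IsoOne.

Section Scale.
Variables (l a1 xi1 eta1 a2 xi2 eta2 : C) (psi : V -> V).
Hypotheses (l_neq0 : l != 0) (a2_neq0 : a2 != 0).
Hypotheses (xi1_neq0 : xi1 != 0) (xi2_neq0 : xi2 != 0) (a1xi1 : a1 * xi1 = a2 * xi2).
Local Notation h1 := (affine xi1 eta1).
Local Notation h2 := (affine xi2 eta2).
Hypothesis iso_psi : Vir_iso l a1 h1 l a2 h2 psi.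

Lemma Vir_iso_one_scalar : exists2 c : C, c != 0 & psi 1 = c%:P%:P.
Proof.
set g := (psi 1)`_0.
have psi1 : psi 1 = g%:P := Vir_iso_one_polyC l_neq0 a2_neq0 xi2_neq0 iso_psi.
have : a2%:P * g^`() = 0.
  move: (Vir_iso_one_Fop l_neq0 a2_neq0 xi2_neq0 iso_psi).
  rewrite -/g Fop_affine a1xi1 -!mul_polyC polyCM => Fg.
  have -> : a2%:P * g^`() = a2%:P * (xi2%:P * g) - a2%:P * (xi2%:P * g - g^`()) by ring.
  by rewrite -Fg mulrA subrr.
move/eqP; rewrite mulf_eq0 polyC_eq0 (negbTE a2_neq0) => /eqP /deriv_eq0_size /size1_polyC g_C.
exists g`_0; last by rewrite psi1 {1}g_C.
by have := Vir_iso_one_neq0 iso_psi; rewrite psi1 {1}g_C !polyC_eq0.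
Qed.

Lemma Vir_iso_scale :
  exists2 c : C, c != 0 & forall v, psi v = c%:P%:P * std_iso xi1 eta1 xi2 eta2 v.
Proof.
have [c c_neq0 psi1] := Vir_iso_one_scalar; exists c => //.
case: iso_psi => psi_lin _ psi_d.
apply: (@hom_eq l a1 xi1 eta1 l a2 h2 l_neq0 xi1_neq0 psi
          (fun v => c%:P%:P * std_iso xi1 eta1 xi2 eta2 v)) => //.
- exact: Clinear_scale (std_iso_Clinear _ _ _ _).
- move=> m v; rewrite (std_iso_dact _ _ xi1_neq0 a1xi1).
  by rewrite (ClinearZ (dact_Clinear _ _ _ _)).
- by rewrite psi1 (std_iso1 _ _ _ xi1_neq0) mulr1.
Qed.

End Scale.

End Omega.

Theorem corollary3p5 (R : realType)
  (l1 a1 xi1 eta1 l2 a2 xi2 eta2 : R[i]) :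
  l1 != 0 -> l2 != 0 -> a1 != 0 -> a2 != 0 -> xi1 != 0 -> xi2 != 0 ->
  let h1 := xi1 *: 'X + eta1%:P in
  let h2 := xi2 *: 'X + eta2%:P in
  (Omega_isomorphic l1 a1 h1 l2 a2 h2 <-> l1 = l2 /\ a1 * xi1 = a2 * xi2) /\
  (l1 = l2 /\ a1 * xi1 = a2 * xi2 ->
     (exists phi : {poly {poly R[i]}} -> {poly {poly R[i]}},
        Clinear phi /\ phi_spec (eta2 - eta1) h1 h2 phi) /\
     forall phi : {poly {poly R[i]}} -> {poly {poly R[i]}},
       Clinear phi -> phi_spec (eta2 - eta1) h1 h2 phi ->
       forall psi : {poly {poly R[i]}} -> {poly {poly R[i]}},
         Vir_iso l1 a1 h1 l2 a2 h2 psi <->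
         exists c : R[i], c != 0 /\ forall v, psi v = c%:P%:P * phi v).
Proof.
move=> l1_neq0 l2_neq0 _ a2_neq0 xi1_neq0 xi2_neq0 h1 h2.
set phi0 := std_iso xi1 eta1 xi2 eta2.
have phi0_iso : l1 = l2 -> a1 * xi1 = a2 * xi2 -> Vir_iso l1 a1 h1 l2 a2 h2 phi0.
  by move=> <-; apply: std_iso_Vir_iso.
split.
  split=> [[psi iso_psi] | [l12 a1xi1]]; last by exists phi0; apply: phi0_iso.
  have l12 := Vir_iso_lambda iso_psi; rewrite -l12 in iso_psi.
  by split => //; apply: (Vir_iso_alpha l1_neq0 a2_neq0 xi2_neq0 iso_psi).
move=> [l12 a1xi1]; split.
  by exists phi0; split; [apply: std_iso_Clinear | apply: std_iso_spec].
move=> phi phi_lin phi_spec psi.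
have phi_phi0 := phi_spec_unique xi1_neq0 phi_lin phi_spec.
split=> [iso_psi | [c [c_neq0 psi_c]]].
  rewrite -l12 in iso_psi.
  have [c c_neq0 psi_c] := Vir_iso_scale l1_neq0 a2_neq0 xi1_neq0 xi2_neq0 a1xi1 iso_psi.
  by exists c; split => // v; rewrite psi_c phi_phi0.
apply: (eq_Vir_iso _ (Vir_isoZ c_neq0 (phi0_iso l12 a1xi1))) => v.
by rewrite psi_c phi_phi0.
Qed.
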